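(* For plane binary tree shapes $t$ let $S_t$, $T$ be as in the context. Then \[ \sum_{\substack{t \in \mathcal{B}_{\le n}\\ |t| \ge \log_4 n}} \left(1 - \frac{[z^n]S_t(z)}{[z^n]T(z)}\right) = \Omega\!\left(\sqrt{n}\right) \quad \text{as } n\to\infty . \]
   Context: A plane binary tree is a rooted tree in which each node has a left and a right slot, each empty or holding a subtree; $\mathcal{B}_{\le n}$ is the set of (unlabeled) plane binary trees with at most $n$ nodes, and $|t|$ is the number of nodes. A plane increasing binary tree of size $n$ is a plane binary tree whose $n$ nodes are labeled $1,\dots,n$ increasingly along every path from the root; their exponential generating function is $T(z)=z/(1-z)$, so $[z^n]T(z)=1$. A fringe subtree is a node with all its descendants; its shape is obtained by forgetting labels. For a shape $t$ with $k$ nodes, $\ell(t)$ is its number of increasing labelings (equal to $k!$ divided by the product of the sizes of all fringe subtrees of $t$) and $w(t)=\ell(t)/k!$. $S_t(z)$ is the exponential generating function of plane increasing binary trees having no fringe subtree of shape $t$; it is the power series solution of $S_t'(z)=(1+S_t(z))^2-w(t)kz^{k-1}$, $S_t(0)=0$. *)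

From Stdlib Require Import Reals Lra Lia Arith List.
Import ListNotations.
Open Scope R_scope.

(* Plane binary trees: [E] is an empty slot, [N l r] a node with left and
   right slots.  A (nonempty) plane binary tree shape is a term [N l r]. *)
Inductive bt : Type := E : bt | N : bt -> bt -> bt.

Fixpoint bsize (t : bt) : nat :=
  match t with E => 0%nat | N l r => S (bsize l + bsize r) end.

(* trees_by_size n = [B_0; B_1; ...; B_n], B_k = list of all trees with k nodes *)
Fixpoint trees_by_size (n : nat) : list (list bt) :=
  match n with
  | O => [[E]]
  | S m =>
      let L := trees_by_size m in
      L ++ [flat_map (fun k =>
               flat_map (fun l => map (fun r => N l r) (nth (m - k) L []))
                        (nth k L []))
             (seq 0 (S m))]
  end.

Definition B_le (n : nat) : list bt :=
  flat_map (fun k => nth k (trees_by_size n) []) (seq 1 n).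

Fixpoint hookprod (t : bt) : nat :=
  match t with E => 1%nat | N l r => (bsize t * hookprod l * hookprod r)%nat end.

(* number of increasing labelings: k! / prod of fringe subtree sizes *)
Definition ell (t : bt) : nat := Nat.div (fact (bsize t)) (hookprod t).

Definition wt (t : bt) : R := INR (ell t) / INR (fact (bsize t)).

Fixpoint sumR (l : list R) : R :=
  match l with [] => 0 | x :: l' => x + sumR l' end.

(* Coefficients [s_0; ...; s_m] of the power series solution S of
   S'(z) = (1 + S(z))^2 - w k z^(k-1),  S(0) = 0,
   i.e. s_0 = 0 and (j+1) s_(j+1) = [z^j](1+S)^2 - [j = k-1] w k. *)
Fixpoint Scoefs (k : nat) (w : R) (m : nat) : list R :=
  match m with
  | O => [0]
  | S j =>
      let L := Scoefs k w j in
      let c := fun i : nat => (if Nat.eqb i 0 then 1 else 0) + nth i L 0 in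
      let sq := sumR (map (fun i => c i * c (j - i)%nat) (seq 0 (S j))) in
      let corr := if Nat.eqb j (k - 1) then w * INR k else 0 in
      L ++ [(sq - corr) / INR (S j)]
  end.

Definition coef_S (t : bt) (n : nat) : R :=
  nth n (Scoefs (bsize t) (wt t) n) 0.

(* [z^n] T(z), T(z) = z/(1-z) *)
Definition coef_T (n : nat) : R := if Nat.eqb n 0 then 0 else 1.

Definition log4 (x : R) : R := ln x / ln 4.

Definition the_sum (n : nat) : R :=
  sumR (map (fun t => 1 - coef_S t n / coef_T n)
            (filter (fun t => if Rle_dec (log4 (INR n)) (INR (bsize t)) then true else false)
                    (B_le n))).

From Stdlib Require Import Reals Lra Lia Arith List.
Import ListNotations.
Open Scope R_scope.

(* Let d_n = 1 - [z^n]S_t / [z^n]T with k = |t| and w = w(t).  Comparing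
   S_t' = (1 + S_t)^2 - w k z^(k-1) with T' = (1 + T)^2 gives
   (n+1) d_(n+1) = 2 A_n - Q_n (+ w k at n = k-1), where A_n = d_0 + ... + d_n
   and Q_n = sum_i d_i d_(n-i).  Hence d vanishes below k, d_k = w, and
   0 <= d <= 1.  Since 0 <= Q_n <= A_n^2, the normalised partial sums
   A_n / ((n+1)(n+2)) decrease from u = w / ((k+1)(k+2)) by at most
   u^2 (n+1)^2, so d_n >= 2 (n+1) u - 3 u^2 (n+1)^3.  Keep only the trees of
   size k ~ n^(1/4) >= log_4 n: their weights sum to 1 and are exponentially
   small in k, so their contribution is about 2n / k^2 ~ 2 sqrt n. *)

Lemma sumR_app (l1 l2 : list R) : sumR (l1 ++ l2) = sumR l1 + sumR l2.
Proof. induction l1 as [|x l1 IH]; simpl; [ring | rewrite IH; ring]. Qed.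

Lemma sumR_map_seq (f : nat -> R) (n : nat) :
  sumR (map f (seq 0 (S n))) = sum_f_R0 f n.
Proof.
  induction n as [|n IH]; [simpl; ring|].
  rewrite seq_S, map_app, sumR_app, IH. simpl. ring.
Qed.

Lemma sumR_flat_map {A B : Type} (f : B -> R) (g : A -> list B) (l : list A) :
  sumR (map f (flat_map g l)) = sumR (map (fun x => sumR (map f (g x))) l).
Proof.
  induction l as [|x l IH]; simpl; [reflexivity|].
  rewrite map_app, sumR_app, IH. reflexivity.
Qed.

Lemma sumR_map_scal {A : Type} (c : R) (f : A -> R) (l : list A) :
  sumR (map (fun x => c * f x) l) = c * sumR (map f l).
Proof. induction l as [|x l IH]; simpl; [ring | rewrite IH; ring]. Qed.

Lemma sumR_map_le {A : Type} (f g : A -> R) (l : list A) :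
  (forall x, In x l -> f x <= g x) -> sumR (map f l) <= sumR (map g l).
Proof.
  induction l as [|x l IH]; simpl; intros Hfg; [lra|].
  pose proof (Hfg x (or_introl eq_refl)).
  pose proof (IH (fun y Hy => Hfg y (or_intror Hy))). lra.
Qed.

Lemma sumR_map_nonneg {A : Type} (f : A -> R) (l : list A) :
  (forall x, In x l -> 0 <= f x) -> 0 <= sumR (map f l).
Proof.
  induction l as [|x l IH]; simpl; intros Hpos; [lra|].
  pose proof (Hpos x (or_introl eq_refl)).
  pose proof (IH (fun y Hy => Hpos y (or_intror Hy))). lra.
Qed.

Lemma sumR_map_ge_elem {A : Type} (f : A -> R) (l : list A) (x : A) :
  (forall y, In y l -> 0 <= f y) -> In x l -> f x <= sumR (map f l).
Proof.
  induction l as [|y l IH]; simpl; intros Hpos Hx; [contradiction|].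
  assert (Htail : 0 <= sumR (map f l)) by (apply sumR_map_nonneg; auto).
  destruct Hx as [<- | Hx].
  - lra.
  - pose proof (Hpos y (or_introl eq_refl)).
    pose proof (IH (fun z Hz => Hpos z (or_intror Hz)) Hx). lra.
Qed.

Lemma sum_f_R0_nonneg (f : nat -> R) (n : nat) :
  (forall i, (i <= n)%nat -> 0 <= f i) -> 0 <= sum_f_R0 f n.
Proof.
  intros Hpos. rewrite <- (sum_eq_R0 (fun _ => 0) n) by reflexivity.
  apply sum_Rle. exact Hpos.
Qed.

Lemma sum_f_R0_ge_term (f : nat -> R) (n i : nat) :
  (forall j, (j <= n)%nat -> 0 <= f j) -> (i <= n)%nat -> f i <= sum_f_R0 f n.
Proof.
  induction n as [|n IH]; intros Hpos Hi.
  - replace i with 0%nat by lia. simpl. lra.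
  - rewrite tech5. pose proof (Hpos (S n) (le_n _)).
    destruct (Nat.eq_dec i (S n)) as [-> | Hne].
    + pose proof (sum_f_R0_nonneg f n (fun j Hj => Hpos j ltac:(lia))). lra.
    + pose proof (IH (fun j Hj => Hpos j ltac:(lia)) ltac:(lia)). lra.
Qed.

Lemma sum_f_R0_reverse (f : nat -> R) (n : nat) :
  sum_f_R0 (fun i => f (n - i)%nat) n = sum_f_R0 f n.
Proof.
  induction n as [|n IH]; [reflexivity|].
  rewrite decomp_sum, tech5, <- IH by lia.
  change (fun i => f (S n - S i)%nat) with (fun i => f (n - i)%nat).
  rewrite Nat.sub_0_r. simpl pred. ring.
Qed.

Lemma sum_f_R0_one_minus_mul (x y : nat -> R) (n : nat) :
  sum_f_R0 (fun i => (1 - x i) * (1 - y i)) n =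
  INR (S n) - sum_f_R0 x n - sum_f_R0 y n + sum_f_R0 (fun i => x i * y i) n.
Proof.
  induction n as [|n IH]; simpl sum_f_R0; [simpl; ring|].
  rewrite IH, (S_INR (S n)). ring.
Qed.

(** * The deficit recurrence *)

Definition forcing (k : nat) (w : R) (j : nat) : R :=
  if Nat.eqb j (k - 1) then w * INR k else 0.

Definition cauchy_sq (d : nat -> R) (j : nat) : R :=
  sum_f_R0 (fun i => d i * d (j - i)%nat) j.

Definition scaled_psum (d : nat -> R) (j : nat) : R :=
  sum_f_R0 d j / ((INR j + 1) * (INR j + 2)).

Lemma psum_eq_scaled d j :
  sum_f_R0 d j = scaled_psum d j * ((INR j + 1) * (INR j + 2)).
Proof. pose proof (pos_INR j). unfold scaled_psum. field. lra. Qed.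

Lemma forcing_nonneg k w j : 0 <= w -> 0 <= forcing k w j.
Proof.
  intros Hw. unfold forcing. destruct (Nat.eqb j (k - 1)); [|lra].
  apply Rmult_le_pos; [exact Hw | apply pos_INR].
Qed.

Lemma forcing_off k w j : j <> (k - 1)%nat -> forcing k w j = 0.
Proof. intros Hj. unfold forcing. apply Nat.eqb_neq in Hj. rewrite Hj. reflexivity. Qed.

Section DeficitRecurrence.

Variables (k : nat) (w : R) (d : nat -> R).

Hypothesis w_bounds : 0 <= w <= 1.
Hypothesis d_0 : d 0%nat = 0.
(* [1 - d] is the coefficient sequence of [1 + S], so this is
   [S' = (1 + S)^2 - w k z^(k-1)] read off at [z^j]. *)
Hypothesis d_rec : forall j,
  INR (S j) * (1 - d (S j)) =
  sum_f_R0 (fun i => (1 - d i) * (1 - d (j - i)%nat)) j - forcing k w j.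

Lemma deficit_rec_psum j :
  INR (S j) * d (S j) = 2 * sum_f_R0 d j - cauchy_sq d j + forcing k w j.
Proof.
  pose proof (d_rec j) as Hj.
  rewrite sum_f_R0_one_minus_mul, (sum_f_R0_reverse d) in Hj.
  unfold cauchy_sq. lra.
Qed.

Lemma deficit_zero_below i : (i < k)%nat -> d i = 0.
Proof.
  induction i as [i IH] using lt_wf_ind. intros Hik.
  destruct i as [|i]; [exact d_0|].
  assert (Hsum : sum_f_R0 d i = 0) by (apply sum_eq_R0; intros; apply IH; lia).
  assert (Hsq : cauchy_sq d i = 0).
  { apply sum_eq_R0. intros j Hj. rewrite (IH j) by lia. ring. }
  pose proof (deficit_rec_psum i) as Hrec.
  rewrite Hsum, Hsq, forcing_off in Hrec by lia.
  assert (0 < INR (S i)) by (apply lt_0_INR; lia). nra.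
Qed.

Lemma deficit_psum_at_k : (1 <= k)%nat -> sum_f_R0 d k = w.
Proof.
  intros Hk. replace k with (S (k - 1)) by lia.
  rewrite tech5, sum_eq_R0 by (intros; apply deficit_zero_below; lia).
  pose proof (deficit_rec_psum (k - 1)) as Hrec.
  rewrite sum_eq_R0 in Hrec by (intros; apply deficit_zero_below; lia).
  unfold cauchy_sq in Hrec.
  rewrite sum_eq_R0 in Hrec by (intros; rewrite deficit_zero_below by lia; ring).
  unfold forcing in Hrec. rewrite Nat.eqb_refl in Hrec.
  replace (S (k - 1)) with k in * by lia.
  assert (0 < INR k) by (apply lt_0_INR; lia). nra.
Qed.

Lemma deficit_bounds i : 0 <= d i <= 1.
Proof.
  induction i as [i IH] using lt_wf_ind.
  destruct i as [|j]; [rewrite d_0; lra|].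
  assert (Hpos : 0 < INR (S j)) by (apply lt_0_INR; lia).
  assert (Hprod : forall i, (i <= j)%nat ->
            0 <= d i * d (j - i)%nat <= d i /\ 0 <= (1 - d i) * (1 - d (j - i)%nat)).
  { intros i Hi. destruct (IH i ltac:(lia)), (IH (j - i)%nat ltac:(lia)). split; [split|]; nra. }
  split.
  - assert (Hsq : cauchy_sq d j <= sum_f_R0 d j) by (apply sum_Rle; apply Hprod).
    assert (0 <= sum_f_R0 d j) by (apply sum_f_R0_nonneg; intros; apply IH; lia).
    pose proof (forcing_nonneg k w j (proj1 w_bounds)).
    pose proof (deficit_rec_psum j).
    apply Rmult_le_reg_l with (INR (S j)); [exact Hpos | lra].
  - enough (0 <= INR (S j) * (1 - d (S j))).
    { apply Rmult_le_reg_l with (INR (S j)); [exact Hpos | lra]. }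
    rewrite d_rec. destruct (Nat.eq_dec j (k - 1)) as [Hjk | Hjk].
    + assert (Hone : sum_f_R0 (fun i => (1 - d i) * (1 - d (j - i)%nat)) j = INR (S j)).
      { assert (Hzero : forall i, (i <= j)%nat -> d i = 0).
        { intros [|i] Hi; [exact d_0 | apply deficit_zero_below; lia]. }
        rewrite (sum_eq _ (fun _ => 1)), sum_cte; [ring|].
        intros i Hi. rewrite !Hzero by lia. ring. }
      unfold forcing. rewrite Hone, <- Hjk, Nat.eqb_refl.
      assert (INR k <= INR (S j)) by (apply le_INR; lia). nra.
    + rewrite forcing_off, Rminus_0_r by exact Hjk.
      apply sum_f_R0_nonneg. apply Hprod.
Qed.

Lemma cauchy_sq_bounds j : 0 <= cauchy_sq d j <= sum_f_R0 d j ^ 2.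
Proof.
  assert (Hd : forall i, 0 <= d i) by (intros; apply deficit_bounds).
  split.
  - apply sum_f_R0_nonneg. intros i _. apply Rmult_le_pos; apply Hd.
  - replace (sum_f_R0 d j ^ 2) with (sum_f_R0 d j * sum_f_R0 d j) by ring.
    rewrite scal_sum. apply sum_Rle. intros i Hi.
    apply Rmult_le_compat_l; [apply Hd|].
    apply sum_f_R0_ge_term; [intros; apply Hd | lia].
Qed.

Lemma scaled_psum_nonneg j : 0 <= scaled_psum d j.
Proof.
  pose proof (pos_INR j).
  apply Rmult_le_pos; [apply sum_f_R0_nonneg; intros; apply deficit_bounds|].
  left. apply Rinv_0_lt_compat. nra.
Qed.

(* Dividing by [(j+1)(j+2)] turns [(j+1) A_(j+1) = (j+3) A_j - Q_j]
   into a plain decrement. *)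
Lemma scaled_psum_step j : (1 <= k <= j)%nat ->
  scaled_psum d (S j) =
  scaled_psum d j - cauchy_sq d j / ((INR j + 1) * (INR j + 2) * (INR j + 3)).
Proof.
  intros Hkj. pose proof (deficit_rec_psum j) as Hrec.
  rewrite forcing_off, S_INR in Hrec by lia.
  unfold scaled_psum. rewrite tech5, S_INR.
  pose proof (pos_INR j).
  replace (d (S j)) with ((2 * sum_f_R0 d j - cauchy_sq d j) / (INR j + 1))
    by (field_simplify_eq; lra).
  field. lra.
Qed.

Lemma scaled_psum_decrement_bounds j :
  0 <= cauchy_sq d j / ((INR j + 1) * (INR j + 2) * (INR j + 3))
    <= scaled_psum d j ^ 2 * (INR j + 1).
Proof.
  destruct (cauchy_sq_bounds j) as [Q0 Q1]. rewrite psum_eq_scaled in Q1.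
  set (b := scaled_psum d j) in *. set (x := INR j) in *.
  assert (x0 : 0 <= x) by apply pos_INR.
  assert (Hc : 0 < (x + 1) * (x + 2) * (x + 3)) by nra.
  split; [apply Rmult_le_pos; [lra | left; apply Rinv_0_lt_compat; lra]|].
  apply Rmult_le_reg_r with ((x + 1) * (x + 2) * (x + 3)); [lra|].
  replace (cauchy_sq d j / ((x + 1) * (x + 2) * (x + 3)) * ((x + 1) * (x + 2) * (x + 3)))
    with (cauchy_sq d j) by (field; lra).
  assert (0 <= b ^ 2 * (x + 1) ^ 2 * (x + 2))
    by (apply Rmult_le_pos; [|lra]; apply Rmult_le_pos; apply pow2_ge_0).
  nra.
Qed.

Lemma scaled_psum_bounds j : (1 <= k <= j)%nat ->
  let u := w / ((INR k + 1) * (INR k + 2)) in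
  u - u ^ 2 * (INR j + 1) ^ 2 <= scaled_psum d j <= u.
Proof.
  intros [Hk Hkj] u. induction Hkj as [|j Hkj IH].
  - unfold scaled_psum. rewrite deficit_psum_at_k by exact Hk. fold u.
    assert (0 <= u ^ 2 * (INR k + 1) ^ 2) by (apply Rmult_le_pos; apply pow2_ge_0).
    lra.
  - rewrite scaled_psum_step, S_INR by lia.
    pose proof (scaled_psum_nonneg j). pose proof (scaled_psum_decrement_bounds j).
    assert (scaled_psum d j ^ 2 <= u ^ 2) by (destruct IH; nra).
    assert (0 <= INR j) by apply pos_INR.
    split; nra.
Qed.

Lemma deficit_lower n : (1 <= k < n)%nat ->
  let u := w / ((INR k + 1) * (INR k + 2)) in
  2 * (INR n + 1) * u - 3 * u ^ 2 * (INR n + 1) ^ 3 <= d n.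
Proof.
  intros [Hk Hkn] u. destruct n as [|j]; [lia|].
  destruct (scaled_psum_bounds j ltac:(lia)) as [Blo Bhi]. fold u in Blo, Bhi.
  pose proof (deficit_rec_psum j) as Hrec. rewrite forcing_off in Hrec by lia.
  destruct (cauchy_sq_bounds j) as [_ Hq].
  rewrite !S_INR in *.
  set (x := INR j) in *. set (b := scaled_psum d j) in *.
  assert (x0 : 0 <= x) by apply pos_INR.
  rewrite psum_eq_scaled in Hrec, Hq. fold x b in Hrec, Hq.
  pose proof (scaled_psum_nonneg j) as Hb. fold b in Hb.
  assert (Hbu : b ^ 2 <= u ^ 2) by nra.
  assert (Hquad : 2 * u - 3 * u ^ 2 * (x + 2) ^ 2 <= 2 * b - b ^ 2 * ((x + 1) * (x + 2))).
  { assert (b ^ 2 * ((x + 1) * (x + 2)) <= u ^ 2 * ((x + 1) * (x + 2)))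
      by (apply Rmult_le_compat_r; nra).
    assert (u ^ 2 * (x + 1) ^ 2 <= u ^ 2 * (x + 2) ^ 2)
      by (apply Rmult_le_compat_l; [apply pow2_ge_0 | nra]).
    assert (u ^ 2 * ((x + 1) * (x + 2)) <= u ^ 2 * (x + 2) ^ 2)
      by (apply Rmult_le_compat_l; [apply pow2_ge_0 | nra]).
    lra. }
  assert (Hd : (x + 1) * ((x + 2) * (2 * u - 3 * u ^ 2 * (x + 2) ^ 2)) <= (x + 1) * d (S j)).
  { rewrite Hrec.
    replace ((b * ((x + 1) * (x + 2))) ^ 2)
      with ((x + 1) * (x + 2) * (b ^ 2 * ((x + 1) * (x + 2)))) in Hq by ring.
    assert ((x + 1) * (x + 2) * (2 * u - 3 * u ^ 2 * (x + 2) ^ 2)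
            <= (x + 1) * (x + 2) * (2 * b - b ^ 2 * ((x + 1) * (x + 2))))
      by (apply Rmult_le_compat_l; nra).
    lra. }
  replace (2 * (x + 1 + 1) * u - 3 * u ^ 2 * (x + 1 + 1) ^ 3)
    with ((x + 2) * (2 * u - 3 * u ^ 2 * (x + 2) ^ 2)) by ring.
  apply Rmult_le_reg_l with (x + 1); lra.
Qed.

End DeficitRecurrence.

Section SnocFamily.

Variables (A : Type) (F : nat -> list A) (x0 : A).

Hypothesis F_0 : length (F 0%nat) = 1%nat.
Hypothesis F_S : forall m, exists a, F (S m) = F m ++ [a].

Lemma snoc_family_length m : length (F m) = S m.
Proof.
  induction m as [|m IH]; [exact F_0|].
  destruct (F_S m) as [a ->]. rewrite length_app, IH. simpl. lia.
Qed.

Lemma snoc_family_last m a : F (S m) = F m ++ [a] -> nth (S m) (F (S m)) x0 = a.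
Proof.
  intros ->. rewrite app_nth2; rewrite snoc_family_length; [|lia].
  rewrite Nat.sub_diag. reflexivity.
Qed.

Lemma snoc_family_nth m i : (i <= m)%nat -> nth i (F m) x0 = nth i (F i) x0.
Proof.
  induction m as [|m IH]; intros Hi.
  - replace i with 0%nat by lia. reflexivity.
  - destruct (Nat.eq_dec i (S m)) as [-> | Hne]; [reflexivity|].
    destruct (F_S m) as [a ->].
    rewrite app_nth1 by (rewrite snoc_family_length; lia). apply IH. lia.
Qed.

End SnocFamily.

Definition scoef (k : nat) (w : R) (i : nat) : R := nth i (Scoefs k w i) 0.

Lemma nth_Scoefs k w m i : (i <= m)%nat -> nth i (Scoefs k w m) 0 = scoef k w i.
Proof.
  apply snoc_family_nth; [reflexivity | intros m'; eexists; reflexivity].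
Qed.

Lemma scoef_rec k w j :
  INR (S j) * scoef k w (S j) =
  sum_f_R0 (fun i => ((if Nat.eqb i 0 then 1 else 0) + scoef k w i) *
                     ((if Nat.eqb (j - i) 0 then 1 else 0) + scoef k w (j - i)%nat)) j
  - forcing k w j.
Proof.
  unfold scoef at 1.
  erewrite snoc_family_last; [| reflexivity | intros m'; eexists; reflexivity | reflexivity].
  rewrite <- sumR_map_seq.
  erewrite map_ext_in.
  2:{ intros i Hi. apply in_seq in Hi. rewrite !nth_Scoefs by lia. reflexivity. }
  unfold forcing. field. apply not_0_INR. lia.
Qed.

Definition coef_deficit (k : nat) (w : R) (n : nat) : R :=
  (if Nat.eqb n 0 then 0 else 1) - scoef k w n.

Lemma coef_deficit_0 k w : coef_deficit k w 0 = 0.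
Proof. unfold coef_deficit, scoef. simpl. ring. Qed.

Lemma coef_deficit_rec k w j :
  INR (S j) * (1 - coef_deficit k w (S j)) =
  sum_f_R0 (fun i => (1 - coef_deficit k w i) * (1 - coef_deficit k w (j - i)%nat)) j
  - forcing k w j.
Proof.
  unfold coef_deficit at 1. cbn [Nat.eqb].
  replace (1 - (1 - scoef k w (S j))) with (scoef k w (S j)) by ring.
  rewrite scoef_rec. f_equal. apply sum_eq. intros i _. unfold coef_deficit.
  destruct (Nat.eqb i 0), (Nat.eqb (j - i) 0); ring.
Qed.

Lemma coef_deficit_nonneg k w n : 0 <= w <= 1 -> 0 <= coef_deficit k w n.
Proof.
  intros Hw. apply (deficit_bounds k w); [exact Hw | apply coef_deficit_0 | apply coef_deficit_rec].
Qed.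

Lemma coef_deficit_lower k w n : 0 <= w <= 1 -> (1 <= k < n)%nat ->
  let u := w / ((INR k + 1) * (INR k + 2)) in
  2 * (INR n + 1) * u - 3 * u ^ 2 * (INR n + 1) ^ 3 <= coef_deficit k w n.
Proof.
  intros Hw Hkn.
  apply deficit_lower; [exact Hw | apply coef_deficit_0 | apply coef_deficit_rec | exact Hkn].
Qed.

Lemma coef_ratio_eq_deficit t n : (1 <= n)%nat ->
  1 - coef_S t n / coef_T n = coef_deficit (bsize t) (wt t) n.
Proof.
  intros Hn. unfold coef_T, coef_deficit, coef_S, scoef.
  replace (Nat.eqb n 0) with false by (symmetry; apply Nat.eqb_neq; lia).
  field.
Qed.

(** * Tree shapes and their weights *)

Definition trees_of_size (k : nat) : list bt := nth k (trees_by_size k) [].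

Lemma nth_trees_by_size m k : (k <= m)%nat -> nth k (trees_by_size m) [] = trees_of_size k.
Proof.
  apply snoc_family_nth; [reflexivity | intros m'; eexists; reflexivity].
Qed.

Lemma trees_of_size_S m :
  trees_of_size (S m) =
  flat_map (fun i => flat_map (fun l => map (N l) (trees_of_size (m - i))) (trees_of_size i))
           (seq 0 (S m)).
Proof.
  unfold trees_of_size at 1.
  erewrite snoc_family_last; [| reflexivity | intros m'; eexists; reflexivity | reflexivity].
  rewrite !flat_map_concat_map. f_equal. apply map_ext_in. intros i Hi. apply in_seq in Hi.
  rewrite !nth_trees_by_size by lia. reflexivity.
Qed.

Lemma bsize_trees_of_size k t : In t (trees_of_size k) -> bsize t = k.
Proof.
  revert t. induction k as [k IH] using lt_wf_ind. intros t Ht.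
  destruct k as [|m].
  - destruct Ht as [<- | []]. reflexivity.
  - rewrite trees_of_size_S in Ht.
    apply in_flat_map in Ht as [i [Hi Ht]]. apply in_seq in Hi.
    apply in_flat_map in Ht as [l [Hl Ht]]. apply in_map_iff in Ht as [r [<- Hr]].
    simpl. rewrite (IH i ltac:(lia) l Hl), (IH (m - i)%nat ltac:(lia) r Hr). lia.
Qed.

Lemma fact_mul_divide a b : Nat.divide (fact a * fact b) (fact (a + b)).
Proof.
  remember (a + b)%nat as n eqn:En. revert a b En.
  induction n as [|n IH]; intros a b En.
  - replace a with 0%nat by lia. replace b with 0%nat by lia. exists 1%nat. reflexivity.
  - destruct a as [|a]; [rewrite En; exists 1%nat; simpl; lia|].
    destruct b as [|b]; [rewrite En, Nat.add_0_r; exists 1%nat; simpl; lia|].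
    replace (fact (S n)) with (S a * fact n + S b * fact n)%nat
      by (cbn [fact]; rewrite En; lia).
    apply Nat.divide_add_r.
    + destruct (IH a (S b) ltac:(lia)) as [q Hq].
      exists q. rewrite Hq. change (fact (S a)) with (S a * fact a)%nat. ring.
    + destruct (IH (S a) b ltac:(lia)) as [q Hq].
      exists q. rewrite Hq. change (fact (S b)) with (S b * fact b)%nat. ring.
Qed.

Lemma hookprod_divide_fact t : Nat.divide (hookprod t) (fact (bsize t)).
Proof.
  induction t as [|l IHl r IHr]; [exists 1%nat; reflexivity|].
  cbn [hookprod bsize]. change (fact (S (bsize l + bsize r)))
    with (S (bsize l + bsize r) * fact (bsize l + bsize r))%nat.
  rewrite <- Nat.mul_assoc. apply Nat.mul_divide_mono_l.
  eapply Nat.divide_trans; [|apply fact_mul_divide].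
  eapply Nat.divide_trans; [apply Nat.mul_divide_mono_r, IHl | apply Nat.mul_divide_mono_l, IHr].
Qed.

Lemma hookprod_pos t : (0 < hookprod t)%nat.
Proof.
  induction t; cbn [hookprod bsize]; [lia|].
  apply Nat.mul_pos_pos; [apply Nat.mul_pos_pos|]; lia.
Qed.

Lemma wt_hookprod t : wt t = / INR (hookprod t).
Proof.
  unfold wt, ell. destruct (hookprod_divide_fact t) as [q Hq].
  pose proof (hookprod_pos t). pose proof (fact_neq_0 (bsize t)).
  assert (q <> 0%nat) by (intros ->; lia).
  rewrite Hq, Nat.div_mul, mult_INR by lia.
  field. split; apply not_0_INR; lia.
Qed.

Lemma wt_bounds t : 0 <= wt t <= 1.
Proof.
  rewrite wt_hookprod. pose proof (hookprod_pos t).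
  assert (1 <= INR (hookprod t)) by (apply (le_INR 1); lia).
  split; [left; apply Rinv_0_lt_compat; lra|].
  rewrite <- Rinv_1. apply Rinv_le_contravar; lra.
Qed.

Lemma wt_N l r : wt (N l r) = wt l * wt r / INR (S (bsize l + bsize r)).
Proof.
  rewrite !wt_hookprod. cbn [hookprod bsize]. rewrite !mult_INR.
  pose proof (hookprod_pos l). pose proof (hookprod_pos r).
  field. repeat split; apply not_0_INR; lia.
Qed.

(* [wt] is the shape distribution of a uniformly random increasing tree, whose
   left subtree has a uniformly distributed size. *)
Lemma sum_wt_trees_of_size k : sumR (map wt (trees_of_size k)) = 1.
Proof.
  induction k as [k IH] using lt_wf_ind.
  destruct k as [|m]; [simpl; rewrite wt_hookprod; simpl; lra|].
  assert (Hm : INR (S m) <> 0) by (apply not_0_INR; lia).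
  rewrite trees_of_size_S, sumR_flat_map.
  erewrite map_ext_in with (g := fun _ => / INR (S m)).
  { rewrite sumR_map_seq, sum_cte. field. exact Hm. }
  intros i Hi. apply in_seq in Hi.
  rewrite sumR_flat_map.
  erewrite map_ext_in with (g := fun l => / INR (S m) * wt l).
  { rewrite sumR_map_scal, IH by lia. ring. }
  intros l Hl. rewrite map_map.
  erewrite map_ext_in with (g := fun r => wt l / INR (S m) * wt r).
  { rewrite sumR_map_scal, IH by lia. field. exact Hm. }
  intros r Hr. rewrite wt_N, (bsize_trees_of_size _ _ Hl), (bsize_trees_of_size _ _ Hr).
  replace (i + (m - i))%nat with m by lia. field. exact Hm.
Qed.

Lemma hookprod_ge_exp t : (3/2) ^ bsize t <= 3/2 * INR (hookprod t).
Proof.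
  induction t as [|l IHl r IHr]; [simpl; lra|].
  cbn [bsize hookprod]. rewrite !mult_INR, <- tech_pow_Rmult, pow_add.
  pose proof (hookprod_pos l). pose proof (hookprod_pos r).
  assert (Hl : 1 <= INR (hookprod l)) by (apply (le_INR 1); lia).
  assert (Hr : 1 <= INR (hookprod r)) by (apply (le_INR 1); lia).
  assert (Hsize : INR (S (bsize l + bsize r)) = INR (bsize l + bsize r) + 1) by apply S_INR.
  rewrite Hsize. revert IHl IHr Hl Hr.
  generalize (INR (hookprod l)) (INR (hookprod r)). intros hl hr IHl IHr Hl Hr.
  assert (0 < (3/2) ^ bsize l) by (apply pow_lt; lra).
  assert (0 < (3/2) ^ bsize r) by (apply pow_lt; lra).
  destruct (le_lt_dec 2 (bsize l + bsize r)) as [Hbig | Hsmall].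
  - apply (le_INR 2) in Hbig.
    assert ((3/2) ^ bsize l * (3/2) ^ bsize r <= (3/2 * hl) * (3/2 * hr))
      by (apply Rmult_le_compat; lra).
    assert (0 <= hl * hr) by nra. simpl in Hbig. nra.
  - rewrite <- pow_add.
    assert (1 <= hl * hr) by nra.
    destruct (bsize l + bsize r)%nat as [|[|s]]; [| |lia]; simpl; nra.
Qed.

Lemma pow_two_thirds_three_halves k : (2/3) ^ k * (3/2) ^ k = 1.
Proof. rewrite <- Rpow_mult_distr. replace (2/3 * (3/2)) with 1 by field. apply pow1. Qed.

Lemma wt_le_exp t : wt t <= 3/2 * (2/3) ^ bsize t.
Proof.
  rewrite wt_hookprod. pose proof (hookprod_ge_exp t). pose proof (hookprod_pos t).
  assert (Hpos : 0 < INR (hookprod t)) by (apply lt_0_INR; lia).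
  apply Rmult_le_reg_r with (INR (hookprod t) * (3/2) ^ bsize t).
  { apply Rmult_lt_0_compat; [exact Hpos | apply pow_lt; lra]. }
  rewrite <- Rmult_assoc, Rinv_l, Rmult_1_l by lra.
  replace (3/2 * (2/3) ^ bsize t * (INR (hookprod t) * (3/2) ^ bsize t))
    with (3/2 * INR (hookprod t) * ((2/3) ^ bsize t * (3/2) ^ bsize t)) by ring.
  rewrite pow_two_thirds_three_halves. lra.
Qed.

(** * The layer of trees of size about [n^(1/4)] *)

Lemma the_sum_ge_layer n k : (1 <= k <= n)%nat -> log4 (INR n) <= INR k ->
  sumR (map (fun t => coef_deficit k (wt t) n) (trees_of_size k)) <= the_sum n.
Proof.
  intros Hk Hlog. unfold the_sum, B_le.
  rewrite flat_map_concat_map, <- concat_filter_map, map_map, <- flat_map_concat_map.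
  rewrite sumR_flat_map.
  eapply Rle_trans; [| apply (sumR_map_ge_elem _ _ k)].
  - cbv beta. rewrite nth_trees_by_size by lia. rewrite forallb_filter_id.
    + right. f_equal. apply map_ext_in. intros t Ht.
      rewrite coef_ratio_eq_deficit, (bsize_trees_of_size _ _ Ht) by lia. reflexivity.
    + apply forallb_forall. intros t Ht. rewrite (bsize_trees_of_size _ _ Ht).
      destruct (Rle_dec (log4 (INR n)) (INR k)); [reflexivity | contradiction].
  - intros i Hi. apply in_seq in Hi. apply sumR_map_nonneg. intros t Ht.
    apply filter_In in Ht as [Ht _]. rewrite nth_trees_by_size in Ht by lia.
    rewrite coef_ratio_eq_deficit by lia. apply coef_deficit_nonneg, wt_bounds.
  - apply in_seq. lia.
Qed.

Lemma layer_sum_lower n k : (1 <= k < n)%nat ->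
  let kap := (INR k + 1) * (INR k + 2) in
  2 * (INR n + 1) / kap - 3 * (INR n + 1) ^ 3 * (3/2 * (2/3) ^ k) / kap ^ 2
  <= sumR (map (fun t => coef_deficit k (wt t) n) (trees_of_size k)).
Proof.
  intros Hkn kap.
  set (c := 2 * (INR n + 1) / kap - 3 * (INR n + 1) ^ 3 * (3/2 * (2/3) ^ k) / kap ^ 2).
  rewrite <- (Rmult_1_r c), <- (sum_wt_trees_of_size k), <- sumR_map_scal.
  apply sumR_map_le. intros t Ht.
  pose proof (coef_deficit_lower k (wt t) n (wt_bounds t) Hkn) as Hlow.
  cbv zeta in Hlow. fold kap in Hlow.
  eapply Rle_trans; [|exact Hlow].
  pose proof (wt_bounds t). pose proof (wt_le_exp t) as Hexp.
  rewrite (bsize_trees_of_size _ _ Ht) in Hexp.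
  assert (Hkap : 0 < kap) by (unfold kap; pose proof (pos_INR k); nra).
  assert (0 <= (INR n + 1) ^ 3) by (apply pow_le; pose proof (pos_INR n); lra).
  assert (Hw2 : wt t * wt t <= wt t * (3/2 * (2/3) ^ k)) by (apply Rmult_le_compat_l; lra).
  assert (Hdiff :
    2 * (INR n + 1) * (wt t / kap) - 3 * (wt t / kap) ^ 2 * (INR n + 1) ^ 3 - c * wt t =
    3 * (INR n + 1) ^ 3 / kap ^ 2 * (wt t * (3/2 * (2/3) ^ k) - wt t * wt t))
    by (unfold c; field; lra).
  assert (0 <= 3 * (INR n + 1) ^ 3 / kap ^ 2 * (wt t * (3/2 * (2/3) ^ k) - wt t * wt t)).
  { apply Rmult_le_pos; [|lra].
    apply Rmult_le_pos; [lra|]. left. apply Rinv_0_lt_compat, pow_lt. exact Hkap. }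
  lra.
Qed.

Lemma poly_le_exp k : (100 <= k)%nat -> 9/2 * (INR k + 2) ^ 8 <= (3/2) ^ k.
Proof.
  intros Hk. induction Hk as [|k Hk IH]; [simpl; lra|].
  rewrite S_INR. change ((3/2) ^ S k) with (3/2 * (3/2) ^ k).
  assert (Hy : 102 <= INR k + 2) by (apply (le_INR 100) in Hk; simpl in Hk; lra).
  set (y := INR k + 2) in *.
  assert (Hstep : (y + 1) ^ 8 <= 3/2 * y ^ 8).
  { assert (H2 : (y + 1) ^ 2 <= 11/10 * y ^ 2) by nra.
    replace ((y + 1) ^ 8) with (((y + 1) ^ 2) ^ 4) by (rewrite <- pow_mult; reflexivity).
    replace (y ^ 8) with ((y ^ 2) ^ 4) by (rewrite <- pow_mult; reflexivity).
    assert (((y + 1) ^ 2) ^ 4 <= (11/10 * y ^ 2) ^ 4)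
      by (apply pow_incr; split; [apply pow2_ge_0 | exact H2]).
    rewrite Rpow_mult_distr in H.
    assert (0 <= (y ^ 2) ^ 4) by (apply pow_le, pow2_ge_0).
    simpl ((11/10) ^ 4) in H. lra. }
  replace (INR k + 1 + 2) with (y + 1) by (unfold y; ring).
  lra.
Qed.

Lemma half_sqrt_le_div x K : 0 <= K -> (K + 1) ^ 4 <= x ->
  1/2 * sqrt x <= (x + 1) / ((K + 1) * (K + 2)).
Proof.
  intros HK0 Hlo.
  assert (Hx : 0 < x) by (assert (0 < (K + 1) ^ 4) by (apply pow_lt; lra); lra).
  assert (Hs : sqrt x * sqrt x = x) by (apply sqrt_sqrt; lra).
  assert (0 < sqrt x) by (apply sqrt_lt_R0; lra).
  assert (HK : (K + 1) ^ 2 <= sqrt x).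
  { rewrite <- (sqrt_pow2 ((K + 1) ^ 2)) by (apply pow_le; lra).
    apply sqrt_le_1_alt. rewrite <- pow_mult. exact Hlo. }
  assert ((K + 1) * (K + 2) <= 2 * sqrt x) by nra.
  apply Rmult_le_reg_r with ((K + 1) * (K + 2)); [nra|].
  replace ((x + 1) / ((K + 1) * (K + 2)) * ((K + 1) * (K + 2))) with (x + 1) by (field; lra).
  nra.
Qed.

Lemma layer_bound_ge_sqrt n k :
  (100 <= k)%nat -> (INR k + 1) ^ 4 <= INR n -> INR n + 1 <= (INR k + 2) ^ 4 ->
  let kap := (INR k + 1) * (INR k + 2) in
  1/2 * sqrt (INR n) <= 2 * (INR n + 1) / kap - 3 * (INR n + 1) ^ 3 * (3/2 * (2/3) ^ k) / kap ^ 2.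
Proof.
  intros Hk Hlo Hhi kap.
  pose proof (poly_le_exp k Hk) as Hexp.
  set (x := INR n) in *. set (K := INR k) in *.
  assert (HK0 : 0 <= K) by apply pos_INR.
  assert (Hkap : 1 <= kap) by (unfold kap; nra).
  assert (Hx : 0 <= x) by apply pos_INR.
  assert (Hsmall : 3 * (x + 1) ^ 2 * (3/2 * (2/3) ^ k) <= 1).
  { assert (Hsq : (x + 1) ^ 2 <= (K + 2) ^ 8).
    { replace ((K + 2) ^ 8) with (((K + 2) ^ 4) ^ 2) by (rewrite <- pow_mult; reflexivity).
      apply pow_incr. split; lra. }
    pose proof (pow_two_thirds_three_halves k).
    assert (0 < (2/3) ^ k) by (apply pow_lt; lra).
    assert (0 <= (x + 1) ^ 2) by apply pow2_ge_0.
    assert ((x + 1) ^ 2 * (2/3) ^ k <= (K + 2) ^ 8 * (2/3) ^ k) by (apply Rmult_le_compat_r; lra).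
    assert (9/2 * (K + 2) ^ 8 * (2/3) ^ k <= (3/2) ^ k * (2/3) ^ k)
      by (apply Rmult_le_compat_r; lra).
    lra. }
  assert (Hcorr : 3 * (x + 1) ^ 3 * (3/2 * (2/3) ^ k) / kap ^ 2 <= (x + 1) / kap).
  { replace (3 * (x + 1) ^ 3 * (3/2 * (2/3) ^ k) / kap ^ 2)
      with ((x + 1) / kap * / kap * (3 * (x + 1) ^ 2 * (3/2 * (2/3) ^ k))) by (field; lra).
    assert (0 <= 3 * (x + 1) ^ 2 * (3/2 * (2/3) ^ k))
      by (apply Rmult_le_pos; [apply Rmult_le_pos; [lra | apply pow2_ge_0] |
                               apply Rmult_le_pos; [lra | apply pow_le; lra]]).
    assert (0 <= (x + 1) / kap) by (apply Rmult_le_pos; [lra | left; apply Rinv_0_lt_compat; lra]).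
    assert (/ kap <= 1) by (rewrite <- Rinv_1; apply Rinv_le_contravar; lra).
    assert (0 <= / kap) by (left; apply Rinv_0_lt_compat; lra).
    assert ((x + 1) / kap * / kap <= (x + 1) / kap) by nra.
    assert (0 <= (x + 1) / kap * / kap) by nra.
    nra. }
  pose proof (half_sqrt_le_div x K HK0 Hlo) as Hsqrt. fold kap in Hsqrt.
  lra.
Qed.

Lemma log4_le_of_le_pow x k : 0 < x -> x <= 4 ^ k -> log4 x <= INR k.
Proof.
  intros Hx Hxk. unfold log4.
  assert (Hln4 : 0 < ln 4) by (rewrite <- ln_1; apply ln_increasing; lra).
  assert (Hln : ln x <= INR k * ln 4).
  { rewrite <- ln_pow by lra. destruct (Rle_lt_or_eq_dec _ _ Hxk) as [Hlt | ->]; [|lra].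
    left. apply ln_increasing; assumption. }
  apply Rmult_le_reg_r with (ln 4); [exact Hln4|].
  unfold Rdiv. rewrite Rmult_assoc, Rinv_l, Rmult_1_r by lra. exact Hln.
Qed.

Lemma fourth_root_bracket n : (101 ^ 4 <= n)%nat ->
  exists k, (100 <= k < n)%nat /\
    (INR k + 1) ^ 4 <= INR n /\ INR n + 1 <= (INR k + 2) ^ 4.
Proof.
  intros Hn. set (r := Nat.sqrt n). set (s := Nat.sqrt r).
  destruct (Nat.sqrt_spec' n) as [Hr1 Hr2]. destruct (Nat.sqrt_spec' r) as [Hs1 Hs2].
  fold r in Hr1, Hr2. fold s in Hs1, Hs2.
  assert (Hlo : (s ^ 4 <= n)%nat) by (simpl; nia).
  assert (Hhi : (n < S s ^ 4)%nat) by (simpl; nia).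
  assert (Hs : (101 <= s)%nat).
  { destruct (le_lt_dec 101 s) as [Hs | Hs]; [exact Hs|].
    pose proof (Nat.pow_le_mono_l (S s) 101 4 Hs). lia. }
  assert (Hsn : (s <= s ^ 4)%nat) by (simpl; nia).
  exists (s - 1)%nat. rewrite minus_INR by lia. simpl (INR 1).
  split; [lia|]. split.
  - replace (INR s - 1 + 1) with (INR s) by ring.
    rewrite <- pow_INR. apply le_INR. exact Hlo.
  - replace (INR s - 1 + 2) with (INR (S s)) by (rewrite S_INR; ring).
    rewrite <- S_INR, <- pow_INR. apply le_INR. exact Hhi.
Qed.

Theorem proposition3p11 :
  exists c : R, 0 < c /\
  exists N : nat, forall n : nat, (N <= n)%nat ->
    c * sqrt (INR n) <= the_sum n.
Proof.
  exists (1/2). split; [lra|]. exists (101 ^ 4)%nat. intros n Hn.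
  destruct (fourth_root_bracket n Hn) as [k [Hkn [Hlo Hhi]]].
  assert (Hpow : INR n <= 4 ^ k).
  { pose proof (poly_le_exp k ltac:(lia)).
    assert (1 <= (INR k + 2) ^ 4) by (apply pow_R1_Rle; pose proof (pos_INR k); lra).
    assert ((INR k + 2) ^ 4 <= (INR k + 2) ^ 8)
      by (apply Rle_pow; [pose proof (pos_INR k); lra | lia]).
    assert ((3/2) ^ k <= 4 ^ k) by (apply pow_incr; lra).
    lra. }
  assert (Hlog : log4 (INR n) <= INR k).
  { apply log4_le_of_le_pow; [apply lt_0_INR; lia | exact Hpow]. }
  eapply Rle_trans; [apply (layer_bound_ge_sqrt n k); [lia | exact Hlo | exact Hhi]|].
  eapply Rle_trans; [apply layer_sum_lower; lia|].
  apply the_sum_ge_layer; [lia | exact Hlog].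
Qed.
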